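(* In the Byblos protocol described in the context, if a transaction $T$ is in $\mathit{confirmed}[t]$ at one correct server and in $\mathit{confirmed}[t']$ at another correct server, then $t = t'$.
   Context: Byblos protocol. There are $n=4f+1$ servers, at most $f$ of which are Byzantine; the rest are correct. Clients are not Byzantine (they may crash). Messages between correct parties are eventually delivered, channels are FIFO, senders are authenticated, and every client message (including when forwarded by a server) is signed by the client and cannot be forged. Each correct server keeps an integer $\mathit{clock}$ (initially $0$), sets $\mathit{proposed}[s]$ of pairs $(T,k)$ for each server $s$, and maps $\mathit{confirmed}[t]$, $\mathit{pending}[t]$ from integer timestamps to sets of transactions (initially empty). Client with transaction $T$: broadcasts $\mathrm{Propose}(T)$ to all servers; waits for $\mathrm{ProposeAck}(T,\cdot)$ from at least $n-f$ servers; letting $\mathit{timestamp}[s]$ be the value received from server $s$ ($0$ if none), sets $\hat t$ to $1$ plus the $(f+1)$-st largest value of $\mathit{timestamp}[\cdot]$; then broadcasts $\mathrm{Confirm}(T,\hat t)$ once. Correct server: on $\mathrm{Propose}(T)$ from a client, adds $(T,\mathit{clock})$ to $\mathit{proposed}[\mathit{self}]$, sends $\mathrm{Proposed}(T,\mathit{clock})$ to all servers and $\mathrm{ProposeAck}(T,\mathit{clock})$ to the client; on $\mathrm{Proposed}(T,k)$ from server $s$, adds $(T,k)$ to $\mathit{proposed}[s]$; on $\mathrm{Confirm}(T,\hat t)$ received from a client or forwarded by a server, sets $\mathit{clock}:=\max(\mathit{clock},\hat t)$, adds $T$ to $\mathit{confirmed}[\hat t]$, and forwards $\mathrm{Confirm}(T,\hat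 t)$ to all servers if not previously done. *)

From HB Require Import structures.
From mathcomp Require Import all_boot.

Set Implicit Arguments.
Unset Strict Implicit.
Unset Printing Implicit Defensive.

Section Byblos.

Variable f : nat.
Definition nsrv := (4 * f).+1.

Variables (Client Tx : eqType) (owner : Tx -> Client).

Variable Byz : {set 'I_nsrv}.

Inductive msg :=
  | Propose of Tx
  | ProposeAck of Tx & nat
  | Proposed of Tx & nat
  | Confirm of Tx & nat.

Definition party := ('I_nsrv + Client)%type.

Definition is_server (p : party) : bool := if p is inl _ then true else false.

Record sstate := SState {
  clock : nat;
  proposed : 'I_nsrv -> seq (Tx * nat);
  confirmed : nat -> seq Tx;
  forwarded : seq (Tx * nat)  (* Confirm messages already forwarded *)
}.

(* local state of the client, for a given transaction *)
Record cstate := CState {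
  c_proposed : bool;
  c_acks : 'I_nsrv -> option nat;    (* ProposeAck value received from s *)
  c_confirm : option nat             (* Some t: Confirm(T,t) has been broadcast *)
}.

(* global state: server states, client states, FIFO channels p -> q *)
Record gstate := GState {
  srv : 'I_nsrv -> sstate;
  cli : Tx -> cstate;
  chan : party -> party -> seq msg
}.

Definition upd (A : eqType) (B : Type) (g : A -> B) (a : A) (b : B) : A -> B :=
  fun x => if x == a then b else g x.

Definition send (ch : party -> party -> seq msg) (p q : party) (m : msg) :=
  fun p' q' => if (p' == p) && (q' == q) then rcons (ch p' q') m else ch p' q'.

Definition bcast (ch : party -> party -> seq msg) (p : party) (m : msg) :=
  fun p' q' => if (p' == p) && is_server q' then rcons (ch p' q') m else ch p' q'.

Definition handle_srv (i : 'I_nsrv) (s : sstate) (p : party) (m : msg)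
    (ch : party -> party -> seq msg) : sstate * (party -> party -> seq msg) :=
  match m with
  | Propose T =>
      if p is inr _ then
        (SState (clock s) (upd (proposed s) i ((T, clock s) :: proposed s i))
                (confirmed s) (forwarded s),
         send (bcast ch (inl i) (Proposed T (clock s))) (inl i) p
              (ProposeAck T (clock s)))
      else (s, ch)
  | Proposed T k =>
      if p is inl s' then
        (SState (clock s) (upd (proposed s) s' ((T, k) :: proposed s s'))
                (confirmed s) (forwarded s), ch)
      else (s, ch)
  | ProposeAck _ _ => (s, ch)
  | Confirm T t =>
      let done := (T, t) \in forwarded s in
      (SState (maxn (clock s) t) (proposed s)
              (upd (confirmed s) t (T :: confirmed s t))
              (if done then forwarded s else (T, t) :: forwarded s),
       if done then ch else bcast ch (inl i) (Confirm T t))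
  end.

Definition handle_cli (c : Client) (cs : Tx -> cstate) (p : party) (m : msg)
    : Tx -> cstate :=
  match m, p with
  | ProposeAck T k, inl s =>
      if (owner T == c) && c_proposed (cs T) && (c_acks (cs T) s == None) then
        upd cs T (CState (c_proposed (cs T)) (upd (c_acks (cs T)) s (Some k))
                         (c_confirm (cs T)))
      else cs
  | _, _ => cs
  end.

Definition deliver (st : gstate) (p q : party) : gstate :=
  match chan st p q with
  | [::] => st
  | m :: rest =>
      let ch := fun p' q' => if (p' == p) && (q' == q) then rest
                             else chan st p' q' in
      match q with
      | inl i =>
          if i \in Byz then GState (srv st) (cli st) ch
          else let r := handle_srv i (srv st i) p m ch in
               GState (upd (srv st) i r.1) (cli st) r.2
      | inr c => GState (srv st) (handle_cli c (cli st) p m) ch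
      end
  end.

(* timestamp[s], 0 if none *)
Definition tstamp (a : 'I_nsrv -> option nat) (s : 'I_nsrv) : nat := odflt 0 (a s).

(* 1 + the (f+1)-st largest value of timestamp[.] *)
Definition that (a : 'I_nsrv -> option nat) : nat :=
  (nth 0 (sort geq [seq tstamp a s | s <- enum 'I_nsrv]) f).+1.

(* client-signed messages that exist (Byzantine servers cannot forge) *)
Definition signed (cs : Tx -> cstate) (m : msg) : bool :=
  match m with
  | Propose T => c_proposed (cs T)
  | Confirm T t => c_confirm (cs T) == Some t
  | _ => true
  end.

Inductive step : gstate -> gstate -> Prop :=
  | StDeliver st p q : chan st p q <> [::] -> step st (deliver st p q)
  | StPropose st T : ~~ c_proposed (cli st T) ->
      step st (GState (srv st)
                 (upd (cli st) T (CState true (c_acks (cli st T)) (c_confirm (cli st T))))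
                 (bcast (chan st) (inr (owner T)) (Propose T)))
  | StConfirm st T : c_proposed (cli st T) -> c_confirm (cli st T) = None ->
      nsrv - f <= #|[set s | c_acks (cli st T) s != None]| ->
      step st (GState (srv st)
                 (upd (cli st) T (CState true (c_acks (cli st T))
                                         (Some (that (c_acks (cli st T))))))
                 (bcast (chan st) (inr (owner T))
                        (Confirm T (that (c_acks (cli st T))))))
  | StByz st b q m : b \in Byz -> signed (cli st) m ->
      step st (GState (srv st) (cli st) (send (chan st) (inl b) q m)).

Definition init_state : gstate :=
  GState (fun _ => SState 0 (fun _ => [::]) (fun _ => [::]) [::])
         (fun _ => CState false (fun _ => None) None)
         (fun _ _ => [::]).

Inductive reachable : gstate -> Prop :=
  | Reach0 : reachable init_state
  | ReachS st st' : reachable st -> step st st' -> reachable st'.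

End Byblos.

From HB Require Import structures.
From mathcomp Require Import all_boot.

Set Implicit Arguments.
Unset Strict Implicit.
Unset Printing Implicit Defensive.

(* A correct server puts T into confirmed[t] only when it receives
   Confirm(T, t), and Confirm messages are signed by the client, which
   broadcasts Confirm(T, t^) exactly once.  Hence the invariant: every
   Confirm(T, t) in transit, and every entry T of some confirmed[t], carries
   the timestamp t^ recorded by the client of T.  Byzantine servers can only
   relay signed messages and their own local states stay initial. *)

Section ConfirmInvariant.

Variables (f : nat) (Client Tx : eqType) (owner : Tx -> Client).
Variable Byz : {set 'I_(nsrv f)}.

Local Notation cstates := (Tx -> cstate f).
Local Notation channels := (party f Client -> party f Client -> seq (msg Tx)).

Definition confirm_signed (cs : cstates) (m : msg Tx) : bool :=
  if m is Confirm T t then c_confirm (cs T) == Some t else true.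

Definition chans_signed (cs : cstates) (ch : channels) : Prop :=
  forall p q, all (confirm_signed cs) (ch p q).

Definition confirmed_signed (cs : cstates) (s : sstate f Tx) : Prop :=
  forall T t, T \in confirmed s t -> c_confirm (cs T) = Some t.

Definition confirm_inv (st : gstate f Client Tx) : Prop :=
  chans_signed (cli st) (chan st) /\ forall i, confirmed_signed (cli st) (srv st i).

Definition keeps_confirms (cs cs' : cstates) : Prop :=
  forall T t, c_confirm (cs T) = Some t -> c_confirm (cs' T) = Some t.

Lemma confirm_signed_keep cs cs' m :
  keeps_confirms cs cs' -> confirm_signed cs m -> confirm_signed cs' m.
Proof. by move=> keep; case: m => //= T t /eqP /keep ->. Qed.

Lemma chans_signed_keep cs cs' ch :
  keeps_confirms cs cs' -> chans_signed cs ch -> chans_signed cs' ch.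
Proof.
by move=> keep sig p q; apply: sub_all (sig p q) => m; apply: confirm_signed_keep.
Qed.

Lemma confirmed_signed_keep cs cs' s :
  keeps_confirms cs cs' -> confirmed_signed cs s -> confirmed_signed cs' s.
Proof. by move=> keep sig T t /sig /keep. Qed.

Lemma keeps_confirms_upd cs T c :
  (forall t, c_confirm (cs T) = Some t -> c_confirm c = Some t) ->
  keeps_confirms cs (upd cs T c).
Proof. by move=> keepT T' t; rewrite /upd; case: eqP => // ->; apply: keepT. Qed.

Lemma handle_cli_keeps_confirms c cs p m :
  keeps_confirms cs (handle_cli owner c cs p m).
Proof.
move=> T' t; case: m p => [T|T k|T k|T k] [s|c'] //=; case: ifP => // _.
exact: keeps_confirms_upd.
Qed.

Lemma chans_signed_send cs ch p q m :
  chans_signed cs ch -> confirm_signed cs m -> chans_signed cs (send ch p q m).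
Proof. by move=> sig sigm p' q'; rewrite /send; case: ifP; rewrite ?all_rcons ?sigm sig. Qed.

Lemma chans_signed_bcast cs ch p m :
  chans_signed cs ch -> confirm_signed cs m -> chans_signed cs (bcast ch p m).
Proof. by move=> sig sigm p' q'; rewrite /bcast; case: ifP; rewrite ?all_rcons ?sigm sig. Qed.

Lemma handle_srv_signed i s p m ch cs :
  confirm_signed cs m -> chans_signed cs ch -> confirmed_signed cs s ->
  chans_signed cs (handle_srv i s p m ch).2 /\
  confirmed_signed cs (handle_srv i s p m ch).1.
Proof.
case: m => [T|T k|T k|T t] /= sigm sigch sigs.
- case: p => [s'|c] /=; split => //.
  by apply: chans_signed_send => //; apply: chans_signed_bcast.
- by case: p.
- by case: p.
- split; first by case: ifP => // _; apply: chans_signed_bcast.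
  move=> T' t'; rewrite /upd /=; case: eqP => [->|_]; last exact: sigs.
  by rewrite in_cons => /predU1P [-> | /sigs]; first apply/eqP.
Qed.

Lemma deliver_inv st p q : confirm_inv st -> confirm_inv (deliver owner Byz st p q).
Proof.
case=> sigch sigsrv; rewrite /deliver.
case chan_pq: (chan st p q) => [|m rest]; first by [].
have /andP [sigm sigrest] : all (confirm_signed (cli st)) (m :: rest).
  by rewrite -chan_pq.
clear chan_pq; set ch := fun p' q' => _.
have sigch' : chans_signed (cli st) ch by move=> a b; rewrite /ch; case: ifP.
case: q ch sigch' => [i|c] ch sigch'.
- case: ifP => _; first by [].
  have [sig_out sig_i] := handle_srv_signed i p sigm sigch' (sigsrv i).
  by split => // j /=; rewrite /upd; case: eqP.
- have keep := @handle_cli_keeps_confirms c (cli st) p m.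
  split; first exact: chans_signed_keep sigch'.
  by move=> i; apply: confirmed_signed_keep (sigsrv i).
Qed.

Lemma step_inv st st' : step owner Byz st st' -> confirm_inv st -> confirm_inv st'.
Proof.
case=> {st st'} [st p q _|st T _|st T _ unconfirmed _|st b q m _ sigm];
  [exact: deliver_inv | | | ].
- set cs := upd _ _ _ => -[sigch sigsrv].
  have keep : keeps_confirms (cli st) cs by apply: keeps_confirms_upd.
  split=> [|i]; last exact: confirmed_signed_keep (sigsrv i).
  by apply: chans_signed_bcast => //; apply: chans_signed_keep sigch.
- set cs := upd _ _ _ => -[sigch sigsrv].
  have keep : keeps_confirms (cli st) cs by apply: keeps_confirms_upd; rewrite unconfirmed.
  split=> [|i]; last exact: confirmed_signed_keep (sigsrv i).
  apply: chans_signed_bcast; first exact: chans_signed_keep sigch.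
  by rewrite /= /cs /upd eqxx.
- case=> sigch sigsrv; split => //=; apply: chans_signed_send => //.
  by case: m sigm.
Qed.

Lemma reachable_inv st : reachable owner Byz st -> confirm_inv st.
Proof. by elim=> [|s s' _ inv_s /step_inv]; [split | apply]. Qed.

End ConfirmInvariant.

Theorem lemma1 (f : nat) (Client Tx : eqType) (owner : Tx -> Client)
    (Byz : {set 'I_(nsrv f)}) :
  #|Byz| <= f ->
  forall st : gstate f Client Tx,
  reachable owner Byz st ->
  forall (i j : 'I_(nsrv f)) (T : Tx) (t t' : nat),
    i \notin Byz -> j \notin Byz ->
    T \in confirmed (srv st i) t -> T \in confirmed (srv st j) t' ->
    t = t'.
Proof.
move=> _ st /reachable_inv [_ sigsrv] i j T t t' _ _ /sigsrv confT /sigsrv.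
by rewrite confT => -[].
Qed.
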